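(* Let $A,B\in \mathbb{C}^{n\times n}$. Then the following are equivalent: (1) $A\leq^{\mathrm{cEP}}B$. (2) There exist $E_1=AA^{\mathrm{cEP}}$ and $E_2=E_2^*=E_2^2$ such that $A=\begin{pmatrix} T_1&S_1&S_2\\ 0&N_1&N_2\\ 0&N_3&N_4\end{pmatrix}_{E\times E}$, $B=\begin{pmatrix} T_1&S_1&S_2\\ 0&T_3&T_4\\ 0&0&T_5\end{pmatrix}_{E\times E}$, where $E=\{ E_1,E_2,I_n-E_1-E_2\}$, $T_1\in (E_1\mathbb{C}^{n\times n}E_1)^{-1}$, $T_3\in (E_2\mathbb{C}^{n\times n}E_2)^{-1}$ and $N_1+N_2+N_3+N_4,\ T_5\in \mathbb{C}^{n\times n}$ are nilpotent.
   Context: $\mathbb{C}^{n\times n}$ is the algebra of complex $n\times n$ matrices with conjugate transpose. The core-EP inverse $A^{\mathrm{cEP}}$ of $A$ is the unique $X$ with $XA^{k+1}=A^k$, $AX^2=X$, $(AX)^*=AX$ for some $k\in\mathbb{N}$. The core-EP order is $A\leq^{\mathrm{cEP}}B$ iff $AA^{\mathrm{cEP}}=BA^{\mathrm{cEP}}$ and $A^{\mathrm{cEP}}A=A^{\mathrm{cEP}}B$. For a set $E=\{E_1,E_2,E_3\}$ of idempotents summing to $I_n$ with $E_iE_j=0$ ($i\neq j$), a matrix $X$ is written $X=(E_iXE_j)_{E\times E}$. *)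

From HB Require Import structures.
From mathcomp Require Import all_boot all_order all_algebra.
From mathcomp Require Import boolp classical_sets reals.
From mathcomp Require Import complex.
Set Implicit Arguments. Unset Strict Implicit. Unset Printing Implicit Defensive.
Import Order.TTheory GRing.Theory Num.Theory.
Local Open Scope ring_scope.

Definition ctrmx (R : realType) (n : nat) (A : 'M[R[i]]_n) : 'M[R[i]]_n :=
  map_mx Num.conj (A^T).

Definition is_coreEP (R : realType) (n : nat) (A X : 'M[R[i]]_n) : Prop :=
  exists k : nat,
    [/\ X *m A ^+ k.+1 = A ^+ k, A *m (X *m X) = X & ctrmx (A *m X) = A *m X].

(* The core-EP inverse: the (unique) X satisfying the core-EP equations,
   chosen by classical description (0 if none existed). *)
Definition coreEP (R : realType) (n : nat) (A : 'M[R[i]]_n) : 'M[R[i]]_n :=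
  xget 0 (fun X => is_coreEP A X).

Definition coreEP_le (R : realType) (n : nat) (A B : 'M[R[i]]_n) : Prop :=
  A *m coreEP A = B *m coreEP A /\ coreEP A *m A = coreEP A *m B.

Definition corner_unit (R : realType) (n : nat) (E T : 'M[R[i]]_n) : Prop :=
  T = E *m T *m E /\
  exists Y : 'M[R[i]]_n, [/\ Y = E *m Y *m E, T *m Y = E & Y *m T = E].

Definition mx_nilpotent (R : realType) (n : nat) (N : 'M[R[i]]_n) : Prop :=
  exists k : nat, N ^+ k = 0.

Definition idem_system3 (R : realType) (n : nat) (E1 E2 E3 : 'M[R[i]]_n) : Prop :=
  [/\ E1 *m E1 = E1, E2 *m E2 = E2, E3 *m E3 = E3, E1 + E2 + E3 = 1%:M &
   [/\ E1 *m E2 = 0, E2 *m E1 = 0, E1 *m E3 = 0 & E3 *m E1 = 0] /\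
   E2 *m E3 = 0 /\ E3 *m E2 = 0].

(* Write P := A A^cEP.  The core-EP equations make P a Hermitian idempotent
   with (1 - P) A P = 0, make P A P invertible in the corner algebra
   P C^{nxn} P (with inverse A^cEP), and make (1 - P) A (1 - P) nilpotent: this
   is the core-EP decomposition of A along P.  In terms of P, A <=cEP B says
   exactly P B = P A and B P = A P, i.e. B has the first block row of A and
   vanishes below it in the first block column.  Taking E2 to be the core-EP
   projector of the compression (1 - P) B (1 - P), which lies under 1 - P, and
   applying the core-EP decomposition to that compression yields the remaining
   blocks of B.  The core-EP inverse exists: X := D Q works, where D is a
   Drazin inverse of A and Q the orthogonal projector onto the range of A^k. *)

From HB Require Import structures.
From mathcomp Require Import all_boot all_order all_algebra.
From mathcomp Require Import boolp classical_sets reals.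
From mathcomp Require Import complex.
Import Order.TTheory GRing.Theory Num.Theory.
Local Open Scope ring_scope.
Set Implicit Arguments. Unset Strict Implicit.

Section RingIdentities.
Variable T : pzRingType.
Implicit Types a w x : T.

Lemma mulr_sqr_expr a x j : a * (x * x) = x -> x = a ^+ j * x ^+ j.+1.
Proof.
move=> axx; elim: j => [|j IH]; first by rewrite mul1r expr1.
have -> : a ^+ j.+1 * x ^+ j.+2 = a ^+ j * (a * (x * x)) * x ^+ j.
  by rewrite exprSr !exprS !mulrA.
by rewrite axx -mulrA -exprS -IH.
Qed.

Lemma drazin_of_factor a w m : GRing.comm a w -> a ^+ m = a ^+ m.+1 * w ->
  let d := a ^+ m * w ^+ m.+1 in
  [/\ GRing.comm a d, d * a * d = d & a ^+ m.+1 * d = a ^+ m].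
Proof.
move=> caw am d.
have cXX i j : GRing.comm (a ^+ i) (w ^+ j) by apply/commrX/commr_sym/commrX.
have am_iter j : a ^+ m = a ^+ (j + m) * w ^+ j.
  elim: j => [|j IH]; first by rewrite mulr1.
  by rewrite addSnnS exprD (exprS w) !mulrA -(mulrA _ _ w) -am -exprD -IH.
have Ad : a ^+ m.+1 * d = a ^+ m by rewrite mulrA -exprD -am_iter.
split=> //; first exact: commrM (commrX _ (commr_refl a)) (commrX _ caw).
have dE : d = w ^+ m.+1 * a ^+ m by rewrite /d cXX.
by rewrite {1}dE -!mulrA (mulrA (a ^+ m)) -exprSr Ad -dE.
Qed.

Lemma eq_partition_r (e1 e2 e3 m n : T) : e1 + e2 + e3 = 1 ->
  m * e1 = n * e1 -> m * e2 = n * e2 -> m * e3 = n * e3 -> m = n.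
Proof.
by move=> sum1 h1 h2 h3; rewrite -[m]mulr1 -[n]mulr1 -sum1 !mulrDr h1 h2 h3.
Qed.

Lemma eq_partition_l (e1 e2 e3 m n : T) : e1 + e2 + e3 = 1 ->
  e1 * m = e1 * n -> e2 * m = e2 * n -> e3 * m = e3 * n -> m = n.
Proof.
by move=> sum1 h1 h2 h3; rewrite -[m]mul1r -[n]mul1r -sum1 !mulrDl h1 h2 h3.
Qed.

Lemma compl_idem (p : T) : p * p = p -> (1 - p) * (1 - p) = 1 - p.
Proof. by move=> pp; rewrite mulrBr mulr1 mulrBl mul1r pp subrr subr0. Qed.

Lemma orth_complE (p q : T) : p * q = 0 -> q * p = 0 ->
  [/\ q * (1 - p) = q, (1 - q) * (1 - p) = 1 - p - q
    & (1 - p) * (1 - q) = 1 - p - q].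
Proof.
move=> pq qp; have qp' : q * (1 - p) = q by rewrite mulrBr mulr1 qp subr0.
by rewrite mulrBl mul1r qp' mulrBr mulr1 mulrBl mul1r pq subr0.
Qed.

Lemma compl_block_eq0 (p c e : T) :
  (1 - p) * c * p = 0 -> e * (1 - p) = e -> e * c * p = 0.
Proof. by move=> qcp <-; rewrite -!mulrA (mulrA (1 - p)) qcp mulr0. Qed.

Lemma mulrDsandwich (x y c : T) :
  (x + y) * c * (x + y) = x * c * x + x * c * y + y * c * x + y * c * y.
Proof. by rewrite mulrDr !mulrDl addrACA !addrA. Qed.

Section CoreEPEquations.
Variables (a x : T) (k : nat).
Hypotheses (xa : x * a ^+ k.+1 = a ^+ k) (axx : a * (x * x) = x).

Lemma coreEP_xax : x * a * x = x.
Proof.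
by rewrite {2}(mulr_sqr_expr k axx) mulrA -(mulrA x) -exprS xa -mulr_sqr_expr.
Qed.

Lemma coreEP_xaax : x * a * (a * x) = a * x.
Proof.
have ax : a * x = a ^+ k.+1 * x ^+ k.+1.
  by rewrite {1}(mulr_sqr_expr k axx) mulrA -exprS.
rewrite ax -mulrA (mulrA a) -exprS (exprSr a k.+1) !mulrA xa.
by rewrite -exprSr.
Qed.

Lemma coreEP_proj_idem : a * x * (a * x) = a * x.
Proof. by rewrite -mulrA (mulrA x) coreEP_xax. Qed.

Lemma coreEP_proj_expr : a * x * a ^+ k = a ^+ k.
Proof. by rewrite -{1}xa !mulrA -(mulrA a) axx xa. Qed.

Lemma coreEP_proj_invariant : (1 - a * x) * a * (a * x) = 0.
Proof.
have aax : a * (a * x) = a ^+ k * a * a * x ^+ k.+1.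
  by rewrite -!exprSr !(exprS a) {1}(mulr_sqr_expr k axx) !mulrA.
by rewrite !mulrBl mul1r -(mulrA (a * x)) aax !mulrA coreEP_proj_expr subrr.
Qed.

Lemma coreEP_corner_inv :
  x * (a * x * a * (a * x)) = a * x /\ a * x * a * (a * x) * x = a * x.
Proof.
split; first by rewrite !mulrA coreEP_xax -mulrA coreEP_xaax.
by rewrite -mulrA -(mulrA a x x) axx -mulrA coreEP_proj_idem.
Qed.

Lemma coreEP_nilpotent : ((1 - a * x) * a * (1 - a * x)) ^+ k.+1 = 0.
Proof.
have QaQ : (1 - a * x) * a * (1 - a * x) = (1 - a * x) * a.
  by rewrite mulrBr mulr1 coreEP_proj_invariant subr0.
have pow j : ((1 - a * x) * a) ^+ j.+1 = (1 - a * x) * a ^+ j.+1.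
  elim: j => [|j IH]; first by rewrite !expr1.
  by rewrite exprS IH !mulrA QaQ -mulrA -exprS.
by rewrite QaQ pow exprSr mulrA mulrBl mul1r coreEP_proj_expr subrr mul0r.
Qed.

Lemma coreEP_leE b :
  a * x = b * x /\ x * a = x * b <->
  a * x * b = a * x * a /\ b * (a * x) = a * (a * x).
Proof.
split=> [[axb xab] | [pb bp]].
  split; first by rewrite -mulrA -xab mulrA.
  by rewrite -{1}coreEP_xaax !mulrA -axb -!mulrA (mulrA x a) coreEP_xaax.
split; first by rewrite -{2}axx (mulrA a x x) mulrA bp -!mulrA axx.
by rewrite -{1}coreEP_xax -!mulrA (mulrA a x a) -pb !mulrA coreEP_xax.
Qed.

End CoreEPEquations.
End RingIdentities.

Lemma mx_drazin_factor (F : fieldType) n (A : 'M[F]_n) :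
  exists m (W : 'M[F]_n), GRing.comm A W /\ A ^+ m = A ^+ m.+1 * W.
Proof.
case: n A => [|n] A; first by exists 0%N, 0; split; apply/matrixP => -[].
(* Strip factors 'X off an annihilating polynomial until its constant term is
   nonzero. *)
suff annihilated p j : p != 0 -> A ^+ j * horner_mx A p = 0 ->
    exists m (W : 'M[F]_n.+1), GRing.comm A W /\ A ^+ m = A ^+ m.+1 * W.
  apply: (annihilated (char_poly A) 0%N).
    exact/monic_neq0/char_poly_monic.
  by rewrite expr0 mul1r Cayley_Hamilton.
elim/poly_ind: p j => [|p c IH] j; first by rewrite eqxx.
rewrite rmorphD rmorphM /= horner_mx_X horner_mx_C => pXc_neq0.
have cAp : GRing.comm A (horner_mx A p) by apply: comm_mx_horner.
have [c0 | c_neq0] := eqVneq c 0.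
  rewrite c0 -scalemx1 scale0r addr0 => Ap0; apply: (IH j.+1).
    by apply: contraNneq pXc_neq0 => ->; rewrite c0 mul0r add0r.
  by rewrite exprSr -mulrA cAp.
rewrite mulrDr -mulmxE mul_mx_scalar mulmxE => Ajp.
exists j, (- c^-1 *: horner_mx A p); split.
  by rewrite /GRing.comm -scalerAr -scalerAl cAp.
have AjpA : A ^+ j * horner_mx A p * A = - (c *: A ^+ j).
  by apply/eqP; rewrite -addr_eq0 -mulrA Ajp.
rewrite -scalerAr exprSr -mulrA cAp mulrA AjpA.
by rewrite scalerN scaleNr opprK scalerA mulVf // scale1r.
Qed.

Lemma mx_drazin (F : fieldType) n (A : 'M[F]_n) : exists (D : 'M[F]_n) k,
  [/\ GRing.comm A D, D * A * D = D & A ^+ k.+1 * D = A ^+ k].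
Proof.
have [m [W [cAW AmW]]] := mx_drazin_factor A.
by exists (A ^+ m * W ^+ m.+1), m; apply: drazin_of_factor.
Qed.

Section ConjugateTranspose.
Variables (R : realType) (n : nat).
Implicit Types M N Y Z H : 'M[R[i]]_n.

Lemma ctrmxK : involutive (@ctrmx R n).
Proof. by move=> M; apply/matrixP => i j; rewrite !mxE conjCK. Qed.

Lemma ctrmxM M N : ctrmx (M * N) = ctrmx N * ctrmx M.
Proof. by rewrite /ctrmx -mulmxE trmx_mul map_mxM. Qed.

Lemma ctrmx0 : ctrmx 0 = 0 :> 'M[R[i]]_n.
Proof. by rewrite /ctrmx trmx0 map_mx0. Qed.

Lemma mulmx_ctrmx_eq0 Y : Y * ctrmx Y = 0 -> Y = 0.
Proof.
move=> YY0; apply/matrixP => i j; rewrite mxE.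
have /eqP := congr1 (fun M : 'M_n => M i i) YY0; rewrite -mulmxE !mxE.
rewrite psumr_eq0 => [/allP /(_ j (mem_index_enum _)) | k _].
  by rewrite !mxE mul_conjC_eq0 => /eqP.
by rewrite !mxE mul_conjC_ge0.
Qed.

Lemma ctrmx_mulmx_eq0 Y : ctrmx Y * Y = 0 -> Y = 0.
Proof.
by move=> YY0; rewrite -[Y]ctrmxK (@mulmx_ctrmx_eq0 (ctrmx Y)) ?ctrmx0 ?ctrmxK.
Qed.

Lemma herm_expr_mul_eq0 H Z m : ctrmx H = H -> H ^+ m.+1 * Z = 0 -> H * Z = 0.
Proof.
move=> hH; elim: m Z => [|m IH] Z; first by rewrite expr1.
rewrite exprSr -mulrA => /IH HHZ; apply: ctrmx_mulmx_eq0.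
by rewrite ctrmxM hH -mulrA HHZ mulr0.
Qed.

Lemma range_projector M : exists P G, [/\ ctrmx P = P, P * M = M & P = M * G].
Proof.
(* H := M M^* is Hermitian, hence of index one, so H H^D is the orthogonal
   projector onto the range of H, which is the range of M. *)
pose H := M * ctrmx M; have hH : ctrmx H = H by rewrite ctrmxM ctrmxK.
have [D [k [cHD _ HkD]]] := mx_drazin H.
have HHD : H * H * D = H.
  apply/eqP; rewrite -subr_eq0 -mulrA -[X in _ - X]mulr1 -mulrBr; apply/eqP.
  apply: (herm_expr_mul_eq0 (m := k)) => //.
  by rewrite mulrBr mulr1 mulrA -exprSr (exprS H k.+1) -mulrA HkD -exprS subrr.
exists (H * D), (ctrmx M * D).
have PH : H * D * H = H by rewrite -mulrA -cHD mulrA HHD.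
have cHD' : ctrmx D * H = H * ctrmx D by rewrite -{1}hH -ctrmxM cHD ctrmxM hH.
have PhP : ctrmx (H * D) = H * D * ctrmx (H * D).
  by rewrite ctrmxM hH cHD' -{1}PH -mulrA.
split; last by rewrite mulrA.
  have := congr1 (@ctrmx R n) PhP.
  by rewrite ctrmxK (ctrmxM (H * D)) ctrmxK -PhP => /esym.
apply/eqP; rewrite -subr_eq0 -{2}[M]mul1r -mulrBl; apply/eqP/mulmx_ctrmx_eq0.
by rewrite ctrmxM mulrA -(mulrA _ M) -/H mulrBl mul1r PH subrr mul0r.
Qed.

Lemma herm_idem_orth (P Q : 'M[R[i]]_n) : ctrmx P = P -> ctrmx Q = Q ->
  P * P = P -> (1 - P) * Q = Q -> P * Q = 0 /\ Q * P = 0.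
Proof.
move=> hP hQ PP QQ.
have PQ : P * Q = 0 by rewrite -QQ mulrA mulrBr mulr1 PP subrr mul0r.
by split=> //; rewrite -hQ -hP -ctrmxM PQ ctrmx0.
Qed.

End ConjugateTranspose.

Section IdempotentBlocks.
Variables (R : realType) (n : nat).
Implicit Types E S Y : 'M[R[i]]_n.

Lemma corner_unit_of E S Y : E * E = E -> E * Y = Y -> Y * E = Y ->
  E * S * E * Y = E -> Y * (E * S * E) = E -> corner_unit E (E * S * E).
Proof.
move=> EE EY YE TY YT; rewrite /corner_unit !mulmxE; split.
  by rewrite !mulrA EE -(mulrA _ E E) EE.
by exists Y; rewrite EY YE.
Qed.

Lemma idem_system3_compl E1 E2 : E1 * E1 = E1 -> E2 * E2 = E2 ->
  E1 * E2 = 0 -> E2 * E1 = 0 -> idem_system3 E1 E2 (1%:M - E1 - E2).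
Proof.
move=> E11 E22 E12 E21; rewrite /idem_system3 !mulmxE -[1%:M]/(1 : 'M_n).
have E13 : E1 * (1 - E1 - E2) = 0 by rewrite !mulrBr mulr1 E11 E12 subrr subr0.
have E31 : (1 - E1 - E2) * E1 = 0 by rewrite !mulrBl mul1r E11 E21 subrr subr0.
have E23 : E2 * (1 - E1 - E2) = 0 by rewrite !mulrBr mulr1 E21 E22 subr0 subrr.
have E32 : (1 - E1 - E2) * E2 = 0 by rewrite !mulrBl mul1r E12 E22 subr0 subrr.
split=> //; last by rewrite addrC addrA (addrAC (1 - E1)) !subrK.
by rewrite {1}mulrBl E23 subr0 mulrBl mul1r E13 subr0.
Qed.

End IdempotentBlocks.

Section CoreEPInverse.
Variables (R : realType) (n : nat).
Implicit Types A B X : 'M[R[i]]_n.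

Lemma coreEP_exists A : exists X, is_coreEP A X.
Proof.
have [D [k [cAD DAD AkD]]] := mx_drazin A.
have [P [G [hP PAk PG]]] := range_projector (A ^+ k).
have ADD : A * (D * D) = D by rewrite mulrA cAD DAD.
have PD : P * D = D by rewrite (mulr_sqr_expr k ADD) mulrA PAk.
have DAk1 : D * A ^+ k.+1 = A ^+ k by rewrite (commrX k.+1 (commr_sym cAD)) AkD.
have ADP : A * (D * P) = P.
  by rewrite {1}PG !mulrA cAD -(mulrA D) -exprS DAk1 -PG.
exists (D * P), k; rewrite !mulmxE ADP; split=> //.
- by rewrite -mulrA exprSr (mulrA P) PAk -exprSr DAk1.
- by rewrite -!mulrA (mulrA P D) PD (mulrA D D) mulrA ADD.
Qed.

Lemma coreEP_spec A : is_coreEP A (coreEP A).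
Proof.
by rewrite /coreEP; case: xgetP => // noX; have [X /noX] := coreEP_exists A.
Qed.

Lemma coreEP_decomposition A X : is_coreEP A X ->
  [/\ ctrmx (A * X) = A * X, A * X * (A * X) = A * X,
      (1 - A * X) * A * (A * X) = 0,
      corner_unit (A * X) (A * X * A * (A * X))
    & mx_nilpotent ((1 - A * X) * A * (1 - A * X))].
Proof.
case=> k []; rewrite !mulmxE => xa axx herm.
have PP := coreEP_proj_idem xa axx; have [xT Tx] := coreEP_corner_inv xa axx.
split=> //; first exact: coreEP_proj_invariant xa axx.
  apply: corner_unit_of Tx xT => //; first by rewrite -mulrA axx.
  by rewrite mulrA (coreEP_xax xa axx).
by exists k.+1; exact: coreEP_nilpotent xa axx.
Qed.

Lemma coreEP_leP A B : coreEP_le A B <->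
  A * coreEP A * B = A * coreEP A * A /\
  B * (A * coreEP A) = A * (A * coreEP A).
Proof.
have [k [xa axx _]] := coreEP_spec A; rewrite !mulmxE in xa axx.
by rewrite /coreEP_le !mulmxE; apply: coreEP_leE xa axx B.
Qed.

End CoreEPInverse.

Theorem corollary4p5 (R : realType) (n : nat) (A B : 'M[R[i]]_n) :
  coreEP_le A B <->
  exists E1 E2 : 'M[R[i]]_n,
    let E3 := 1%:M - E1 - E2 in
    [/\ E1 = A *m coreEP A /\ (ctrmx E2 = E2 /\ E2 *m E2 = E2),
        idem_system3 E1 E2 E3,
        (* A = [[T1,S1,S2],[0,N1,N2],[0,N3,N4]]_{ExE} *)
        E2 *m A *m E1 = 0 /\ E3 *m A *m E1 = 0,
        (* B = [[T1,S1,S2],[0,T3,T4],[0,0,T5]]_{ExE} *)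
        [/\ E1 *m B *m E1 = E1 *m A *m E1, E1 *m B *m E2 = E1 *m A *m E2
          & E1 *m B *m E3 = E1 *m A *m E3] /\
        [/\ E2 *m B *m E1 = 0, E3 *m B *m E1 = 0 & E3 *m B *m E2 = 0] &
        (* T1, T3 corner-invertible; N1+N2+N3+N4 and T5 nilpotent *)
        [/\ corner_unit E1 (E1 *m A *m E1), corner_unit E2 (E2 *m B *m E2),
            mx_nilpotent (E2 *m A *m E2 + E2 *m A *m E3 + E3 *m A *m E2 + E3 *m A *m E3)
          & mx_nilpotent (E3 *m B *m E3)]].

Proof.
have [hP PP QAP unitA nilA] := coreEP_decomposition (coreEP_spec A).
have leP := coreEP_leP A B.
rewrite -[1%:M]/(1 : 'M_n) !mulmxE.
move: (A * coreEP A) hP PP QAP unitA nilA leP => P hP PP QAP unitA nilA leP.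
split=> [/leP [PB BP] | [E1 [E2]]]; last first.
  case=> [[-> _] [_ _ _ sum1 _] [P21 P31] [[B11 B12 B13] [B21 B31 _]] _].
  apply/leP; split; first exact: eq_partition_r sum1 B11 B12 B13.
  by apply: (eq_partition_l sum1); rewrite !mulrA ?B11 ?B21 ?P21 ?B31 ?P31.
pose B2 := (1 - P) * B * (1 - P).
have [hP2 P2P2 QBP2 unitB nilB] := coreEP_decomposition (coreEP_spec B2).
have QP2 : (1 - P) * (B2 * coreEP B2) = B2 * coreEP B2.
  by rewrite /B2 !mulrA compl_idem.
move: (B2 * coreEP B2) hP2 P2P2 QBP2 unitB nilB QP2.
move=> P2 hP2 P2P2 QBP2 unitB nilB QP2.
have [PP2 P2P] := herm_idem_orth hP hP2 PP QP2.
have [P2Q E3l E3r] := orth_complE PP2 P2P.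
have E3Q : (1 - P - P2) * (1 - P) = 1 - P - P2.
  by rewrite -E3l -mulrA compl_idem.
have compress x y : x * B2 * y = x * (1 - P) * B * ((1 - P) * y).
  by rewrite /B2 !mulrA.
rewrite !compress ?P2Q ?QP2 ?E3l ?E3r in unitB QBP2 nilB.
exists P, P2; split=> //; first exact: idem_system3_compl.
- by split; apply: compl_block_eq0 QAP _.
- split; first by split; rewrite PB.
  by split=> //; rewrite -mulrA BP mulrA; apply: compl_block_eq0 QAP _.
by split=> //; rewrite -mulrDsandwich addrC subrK.
Qed.
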